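(* Let $T$ be a tree with $t$ vertices, let $K>1$ and let $s$ be a positive integer. If $G$ is an $n$-vertex $K$-almost-regular $K_{s,s}$-free graph with average degree $d\ge (4Kt)^{6s}s^3$, then $G$ contains at least $n\left(\frac{d}{2K}\right)^{t-1}$ labeled induced copies of $T$.
   Context: A graph $G$ is $K$-almost-regular if $\Delta(G)\le K\delta(G)$, where $\Delta(G),\delta(G)$ are the maximum and minimum degrees. $G$ is $K_{s,s}$-free if it contains no copy of the complete bipartite graph $K_{s,s}$ as a subgraph. A labeled induced copy of $T$ in $G$ is an injective map $\varphi:V(T)\to V(G)$ such that for all distinct $u,v\in V(T)$, $\varphi(u)\varphi(v)\in E(G)$ if and only if $uv\in E(T)$. *)

From HB Require Import structures.
From mathcomp Require Import all_boot all_order all_algebra.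
Set Implicit Arguments. Unset Strict Implicit. Unset Printing Implicit Defensive.
Import Order.TTheory GRing.Theory Num.Theory.

Definition simple_graph (V : finType) (e : rel V) : Prop :=
  symmetric e /\ irreflexive e.

Definition deg (V : finType) (e : rel V) (x : V) : nat := #|[set y | e x y]|.

(* maximum degree (0 for the empty graph) *)
Definition maxdeg (V : finType) (e : rel V) : nat := \max_(x : V) deg e x.
(* minimum degree (the default #|V| is never attained by a vertex, since deg < #|V|) *)
Definition mindeg (V : finType) (e : rel V) : nat :=
  \big[minn/#|V|]_(x : V) deg e x.

Definition edges (V : finType) (e : rel V) : {set {set V}} :=
  [set A : {set V} | [exists u, exists v, e u v && (A == [set u; v])]].

Definition connected (V : finType) (e : rel V) : Prop :=
  forall x y : V, connect e x y.

Definition is_tree (V : finType) (e : rel V) : Prop :=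
  [/\ simple_graph e, 0 < #|V|, connected e & #|edges e| = #|V| - 1].

Definition almost_regular (R : realFieldType) (K : R) (V : finType) (e : rel V) : Prop :=
  ((maxdeg e)%:R <= K * (mindeg e)%:R)%R.

Definition Kss_free (s : nat) (V : finType) (e : rel V) : Prop :=
  ~ exists A B : {set V},
      [/\ #|A| = s, #|B| = s, [disjoint A & B] &
          forall a b, a \in A -> b \in B -> e a b].

Definition avg_deg (R : realFieldType) (V : finType) (e : rel V) : R :=
  ((2 * #|edges e|)%:R / (#|V|)%:R)%R.

Definition induced_copies (VT : finType) (eT : rel VT) (V : finType) (e : rel V)
  : {set {ffun VT -> V}} :=
  [set f : {ffun VT -> V} | injectiveb f &&
     [forall u, forall v, (u != v) ==> (e (f u) (f v) == eT u v)]].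

From HB Require Import structures.
From mathcomp Require Import all_boot all_order all_algebra.
From mathcomp Require Import zify ring lra.
Set Implicit Arguments. Unset Strict Implicit. Unset Printing Implicit Defensive.
Import Order.TTheory GRing.Theory Num.Theory.

(* Order the tree so that every vertex after the first has exactly one earlier
   neighbour, and embed it greedily: the root goes anywhere, and each new vertex
   goes to a neighbour of its parent's image that avoids the earlier images, the
   neighbourhoods of the earlier images other than the parent's, and their heavy
   vertices, those sharing at least M = delta/(4t) neighbours with them. Keeping
   all pairwise codegrees of the image below M means that each of those
   neighbourhoods covers fewer than M neighbours of the parent's image, and
   double counting the s-subsets of a neighbourhood in the K_{s,s}-free graph
   shows that every vertex has at most (s-1) Delta^s / (M-s)^s heavy vertices.
   The degree hypothesis then leaves at least delta/2 >= d/(2K) choices at every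
   step. *)

Lemma card_bigcup_le (T I : finType) (P : pred I) (B : I -> {set T}) :
  #|\bigcup_(i | P i) B i| <= \sum_(i | P i) #|B i|.
Proof.
elim/big_rec2: _ => [|i n U _ leUn]; first by rewrite cards0.
by rewrite (leq_trans (leq_card_setU (B i) U).1) ?leq_add2l.
Qed.

Lemma subset_of_card (T : finType) (C : {set T}) k :
  k <= #|C| -> exists2 B : {set T}, B \subset C & #|B| = k.
Proof.
case/card_geqP=> r [r_uniq <- r_sub]; exists [set x in r].
  by apply/subsetP=> x; rewrite inE => /r_sub.
by rewrite cardsE (card_uniqP r_uniq).
Qed.

Lemma connect_exit (T : finType) (r : rel T) (D : {set T}) x y :
  connect r x y -> x \in D -> y \notin D ->
  exists u w, [/\ u \in D, w \notin D & r u w].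
Proof.
move=> /connectP[p]; elim: p x => [|z p IHp] x /=; first by move=> _ -> ->.
case/andP=> xz zp y_last xD yD; have [zD|zD] := boolP (z \in D).
  exact: IHp zp y_last zD yD.
by exists x, z.
Qed.

Lemma ffact_le_exp n m : n ^_ m <= n ^ m.
Proof.
have -> : n ^ m = \prod_(i < m) n by rewrite prod_nat_const card_ord.
by rewrite ffact_prod leq_prod // => i _; apply: leq_subr.
Qed.

Lemma expB_le_ffact n m : (n - m) ^ m <= n ^_ m.
Proof.
have -> : (n - m) ^ m = \prod_(i < m) (n - m) by rewrite prod_nat_const card_ord.
by rewrite ffact_prod leq_prod // => i _; rewrite leq_sub2l // ltnW.
Qed.

Section Degrees.
Variables (V : finType) (e : rel V).

Lemma mindeg_le x : mindeg e <= deg e x.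
Proof. by rewrite /mindeg -minEnat -leEnat bigmin_le. Qed.

Lemma deg_le_maxdeg x : deg e x <= maxdeg e.
Proof. exact: leq_bigmax. Qed.

Hypotheses (e_sym : symmetric e) (e_irr : irreflexive e).

Lemma card_edges_le_arcs (lt : rel V) :
    (forall u v, u != v -> lt u v || lt v u) ->
  #|edges e| <= #|[set q : V * V | e q.1 q.2 && lt q.1 q.2]|.
Proof.
move=> lt_total.
apply: leq_trans (leq_imset_card (fun q : V * V => [set q.1; q.2]) _).
apply: subset_leq_card; apply/subsetP=> A; rewrite inE.
case/existsP=> u /existsP[v /andP[euv /eqP ->]].
have /lt_total/orP[ltuv|ltvu] : u != v by apply: contraTneq euv => ->; rewrite e_irr.
  by apply/imsetP; exists (u, v); rewrite // inE euv ltuv.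
apply/imsetP; exists (v, u); first by rewrite inE /= e_sym euv ltvu.
by rewrite setUC.
Qed.

Lemma double_card_edges_le : #|edges e| * 2 <= \sum_x deg e x.
Proof.
pose lt : rel V := fun u v => enum_rank u < enum_rank v.
have lt_total u v : u != v -> lt u v || lt v u.
  move=> neq_uv; rewrite /lt -neq_ltn.
  by apply: contra neq_uv => /eqP/val_inj/enum_rank_inj ->.
have arcs_deg : #|[set q : V * V | e q.1 q.2]| = \sum_x deg e x.
  rewrite /deg; under eq_bigr => x _ do rewrite -sum1_card.
  by rewrite pair_big_dep /= -sum1_card; apply: eq_bigl => q; rewrite !inE.
rewrite -arcs_deg muln2 -addnn.
have gt_total u v : u != v -> lt v u || lt u v by rewrite orbC; apply: lt_total.
apply: leq_trans (leq_add (card_edges_le_arcs lt_total)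
                          (@card_edges_le_arcs (fun u v => lt v u) gt_total)) _.
rewrite -cardsUI; have -> : [set q : V * V | e q.1 q.2 && lt q.1 q.2] :&:
                        [set q | e q.1 q.2 && lt q.2 q.1] = set0.
  by apply/setP=> q; rewrite !inE /lt; case: ltngtP; rewrite ?andbF.
rewrite cards0 addn0 subset_leq_card //.
by apply/subsetP=> q; rewrite !inE => /orP[]/andP[].
Qed.

Lemma avg_deg_le_maxdeg (R : realFieldType) : (avg_deg R e <= (maxdeg e)%:R)%R.
Proof.
rewrite /avg_deg; have [->|n_gt0] := posnP #|V|; first by rewrite invr0 mulr0.
rewrite ler_pdivrMr ?ltr0n // -natrM ler_nat mulnC (leq_trans double_card_edges_le) //.
by rewrite mulnC -sum_nat_const leq_sum // => x _; apply: deg_le_maxdeg.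
Qed.

End Degrees.

Section Codegrees.
Variables (V : finType) (e : rel V).

Definition nbhd x := [set y | e x y].
Definition codeg x y := #|nbhd x :&: nbhd y|.
Definition heavy M x := [set y | M <= codeg x y].

Lemma codegC x y : codeg x y = codeg y x.
Proof. by rewrite /codeg setIC. Qed.

Lemma sum_binom_codeg s u :
  \sum_w 'C(codeg u w, s) =
  \sum_(S in [set S : {set V} | S \subset nbhd u & #|S| == s])
    #|[set w | S \subset nbhd w]|.
Proof.
have draws w : 'C(codeg u w, s) =
    \sum_(S : {set V}) ((S \subset nbhd u :&: nbhd w) && (#|S| == s)).
  rewrite /codeg -cards_draws -sum1_card big_mkcond /=.
  by apply: eq_bigr => S _; rewrite inE; case: ifP.
rewrite (eq_bigr _ (fun w _ => draws w)) exchange_big [RHS]big_mkcond /=.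
apply: eq_bigr => S _; rewrite inE; case: ifP => [/andP[Su /eqP S_s]|S_bad]; last first.
  by rewrite big1 // => w _; rewrite subsetI -andbA andbCA S_bad andbF.
rewrite S_s eqxx -sum1_card [RHS]big_mkcond /=.
by apply: eq_bigr => w _; rewrite subsetI Su andbT inE; case: (S \subset _).
Qed.

Hypotheses (e_sym : symmetric e) (e_irr : irreflexive e).
Variable s : nat.
Hypothesis e_Kss : Kss_free s e.

Lemma card_common_nbhd_lt (S : {set V}) : #|S| = s -> #|[set w | S \subset nbhd w]| < s.
Proof.
move=> S_s; rewrite ltnNge; apply/negP=> /subset_of_card[B B_sub B_s].
apply: e_Kss; exists S, B; split=> //; last first.
  by move=> a b aS /(subsetP B_sub); rewrite inE => /subsetP/(_ a aS); rewrite inE e_sym.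
rewrite -setI_eq0; apply/eqP/setP=> x; rewrite !inE; apply/negP=> /andP[xS xB].
by move: xB => /(subsetP B_sub); rewrite inE => /subsetP/(_ x xS); rewrite inE e_irr.
Qed.

Lemma card_heavy_binom M u :
  #|heavy M u| * 'C(M, s) <= (s - 1) * 'C(deg e u, s).
Proof.
rewrite -sum_nat_const [X in X <= _]big_mkcond /=.
apply: (@leq_trans (\sum_w 'C(codeg u w, s))).
  by apply: leq_sum => w _; rewrite inE; case: ifP => // /leq_bin2l.
rewrite sum_binom_codeg mulnC -cards_draws -sum_nat_const leq_sum // => S.
by rewrite inE => /andP[_ /eqP/card_common_nbhd_lt]; lia.
Qed.

Lemma card_heavy_exp M u : #|heavy M u| * (M - s) ^ s <= (s - 1) * maxdeg e ^ s.
Proof.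
have := card_heavy_binom M u.
rewrite -(leq_pmul2r (fact_gt0 s)) -!mulnA !bin_ffact => heavy_ffact.
apply: leq_trans (leq_trans _ heavy_ffact) _.
  by rewrite leq_mul2l expB_le_ffact orbT.
have [->|s_gt0] := posnP s; first by [].
by rewrite leq_mul2l (leq_trans (ffact_le_exp _ _)) ?leq_exp2r ?deg_le_maxdeg ?orbT.
Qed.

End Codegrees.

Section TreeGrowth.
Variables (VT : finType) (eT : rel VT).

Definition edges_in (D : {set VT}) := [set A in edges eT | A \subset D].
Definition nbs_in (D : {set VT}) w := [set u in D | eT u w].

(* [growth D b]: [D] is obtained from a single vertex by repeatedly adding a
   vertex with a neighbour in the current set, and [b] records whether each
   added vertex had exactly one such neighbour. *)
Inductive growth : {set VT} -> bool -> Prop :=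
| growth1 r : growth [set r] true
| growthU1 D b w : growth D b -> w \notin D -> 0 < #|nbs_in D w| ->
    growth (w |: D) (b && (#|nbs_in D w| == 1)).

Lemma card_edges_inU1 (D : {set VT}) w : w \notin D ->
  #|edges_in D| + #|nbs_in D w| <= #|edges_in (w |: D)|.
Proof.
move=> wD.
have pair_inj : {in nbs_in D w &, injective (fun u => [set u; w])}.
  move=> u v; rewrite !inE => /andP[uD _] /andP[vD _] uw_vw.
  have : u \in [set v; w] by rewrite -uw_vw !inE eqxx.
  by rewrite !inE => /orP[/eqP //|/eqP uw]; move: wD; rewrite -uw uD.
rewrite -(card_in_imset pair_inj) -cardsUI.
have -> : edges_in D :&: [set [set u; w] | u in nbs_in D w] = set0.
  apply/setP=> A; rewrite !inE; apply/negP=> /andP[/andP[_ AD] /imsetP[u _ A_uw]].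
  by move: AD; rewrite A_uw subUset !sub1set (negbTE wD) andbF.
rewrite cards0 addn0; apply: subset_leq_card; apply/subsetP=> A.
rewrite !inE => /orP[/andP[-> AD]|/imsetP[u]].
  by rewrite (subset_trans AD) ?subsetUr.
rewrite !inE => /andP[uD uw] ->; apply/andP; split.
  by apply/existsP; exists u; apply/existsP; exists w; rewrite uw eqxx.
by apply/subsetP=> x; rewrite !inE => /orP[]/eqP->; rewrite ?eqxx ?uD ?orbT.
Qed.

Lemma growth_card D b : growth D b -> 0 < #|D| /\ #|D| - 1 + ~~ b <= #|edges_in D|.
Proof.
elim=> [r|{}D {}b w _ [D_gt0 IH] wD nbs_gt0]; first by rewrite cards1.
have := card_edges_inU1 wD; rewrite cardsU1 wD /=; split=> //.
by case: b IH => /=; case: (#|nbs_in D w| =P 1); lia.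
Qed.

Lemma connected_growth : connected eT -> 0 < #|VT| -> exists b, growth setT b.
Proof.
move=> eT_conn VT_gt0.
suff grow k : k < #|VT| -> exists D b, growth D b /\ #|D| = k.+1.
  have [D [b [growth_D D_card]]] := grow _ (eq_leq (prednK VT_gt0)).
  exists b; suff <- : D = setT by [].
  by apply/eqP; rewrite eqEcard subsetT cardsT D_card (prednK VT_gt0) leqnn.
elim: k => [_|k IHk k_lt].
  have [r _] : exists r : VT, true by case/card_gt0P: VT_gt0 => r; exists r.
  by exists [set r], true; rewrite cards1; split=> //; constructor.
have [D [b [growth_D D_card]]] := IHk (ltnW k_lt).
have [y yD] : exists y, y \notin D.
  apply/existsP; rewrite -negb_forall; apply: contraTN k_lt => /forallP D_full.
  by rewrite -leqNgt -D_card -cardsT subset_leq_card //; apply/subsetP=> x _.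
have [r rD] : exists r, r \in D by apply/set0Pn; rewrite -card_gt0 D_card.
have [u [w [uD wD uw]]] := connect_exit (eT_conn r y) rD yD.
exists (w |: D), (b && (#|nbs_in D w| == 1)); rewrite cardsU1 wD D_card; split=> //.
by apply: growthU1 => //; apply/card_gt0P; exists u; rewrite inE uD uw.
Qed.

Lemma tree_growth : is_tree eT -> growth setT true.
Proof.
case=> _ VT_gt0 eT_conn card_edges.
have [b growth_VT] := connected_growth eT_conn VT_gt0.
have [_] := growth_card growth_VT; rewrite cardsT -card_edges.
have : #|edges_in setT| <= #|edges eT|.
  by apply/subset_leq_card/subsetP=> A; rewrite inE => /andP[].
by case: b growth_VT => // _; lia.
Qed.

End TreeGrowth.

Section GreedyEmbedding.
Variables (VT : finType) (eT : rel VT) (V : finType) (e : rel V).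
Hypotheses (eT_sym : symmetric eT) (e_sym : symmetric e).
Variables (x0 : V) (M Hb c : nat).
Hypothesis card_heavy_le : forall x, #|heavy e M x| <= Hb.
Hypothesis deg_ge : forall x, c + #|VT| * (1 + M + Hb) <= deg e x.

(* [f] induces an embedding of [eT] restricted to [D] whose image has all
   pairwise codegrees below [M]; fixing [f] to [x0] outside [D] makes these
   partial maps countable as finfuns. *)
Definition good_embedding (D : {set VT}) (f : {ffun VT -> V}) :=
  [forall v, (v \notin D) ==> (f v == x0)] &&
  [forall u, forall v, [&& u \in D, v \in D & u != v] ==>
     [&& f u != f v, e (f u) (f v) == eT u v & codeg e (f u) (f v) < M]].

Definition good_embeddings D := [set f | good_embedding D f].

Lemma card_good_embeddings1 r : #|V| <= #|good_embeddings [set r]|.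
Proof.
pose root_at x : {ffun VT -> V} := [ffun v => if v == r then x else x0].
have root_inj : injective root_at by move=> x y /ffunP/(_ r); rewrite !ffunE eqxx.
rewrite -(card_imset _ root_inj) subset_leq_card //; apply/subsetP=> _ /imsetP[x _ ->].
rewrite inE; apply/andP; split.
  by apply/forallP=> v; rewrite inE ffunE; apply/implyP=> /negbTE ->.
apply/forallP=> u; apply/forallP=> v; rewrite !inE; apply/implyP.
by case/and3P=> /eqP-> /eqP->; rewrite eqxx.
Qed.

Section Extension.
Variables (D : {set VT}) (w p : VT).
Hypotheses (wD : w \notin D) (nbs_in_w : nbs_in eT D w = [set p]).

Definition candidates (g : {ffun VT -> V}) := [set x | e (g p) x &&
  [forall u, (u \in D) ==>
     [&& g u != x, (u != p) ==> ~~ e (g u) x & codeg e (g u) x < M]]].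

(* The images [x] of [w] excluded by [u \in D]; for [u != p] there are fewer
   than [M] of them among the neighbours of [g p], as [codeg e (g u) (g p) < M]. *)
Definition blocked (g : {ffun VT -> V}) u :=
  g u |: ((if u != p then nbhd e (g u) :&: nbhd e (g p) else set0)
          :|: heavy e M (g u)).

Definition extend (g : {ffun VT -> V}) x : {ffun VT -> V} :=
  [ffun v => if v == w then x else g v].

Let p_in_D : p \in D.
Proof. by have := set11 p; rewrite -nbs_in_w inE => /andP[]. Qed.

Lemma card_blocked g u : good_embedding D g -> u \in D -> #|blocked g u| <= 1 + M + Hb.
Proof.
case/andP=> _ /forallP g_good uD; rewrite /blocked.
rewrite (leq_trans (leq_card_setU _ _).1) // cards1 -addnA leq_add2l.
rewrite (leq_trans (leq_card_setU _ _).1) // leq_add ?card_heavy_le //.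
case: ifP => [up|]; last by rewrite cards0.
have /forallP/(_ p) := g_good u; rewrite uD p_in_D up /= => /and3P[_ _].
exact: ltnW.
Qed.

Lemma nbhd_sub_candidates (g : {ffun VT -> V}) :
  nbhd e (g p) \subset candidates g :|: \bigcup_(u in D) blocked g u.
Proof.
apply/subsetP=> x; rewrite !inE => gp_x; rewrite gp_x /= -implyNb; apply/implyP.
case/forallPn=> u; rewrite negb_imply => /andP[uD x_bad].
apply/bigcupP; exists u => //; rewrite !inE.
move: x_bad; rewrite !negb_and negbK negb_imply negbK -leqNgt.
case/or3P=> [/eqP->|/andP[-> gu_x]|->]; by rewrite ?eqxx ?inE ?gu_x ?gp_x ?orbT.
Qed.

Lemma card_candidates g : good_embedding D g -> c <= #|candidates g|.
Proof.
move=> g_good.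
have card_blocked_all : #|\bigcup_(u in D) blocked g u| <= #|VT| * (1 + M + Hb).
  apply: leq_trans (card_bigcup_le _ _) _.
  apply: (@leq_trans (\sum_(u in D) (1 + M + Hb))).
    by apply: leq_sum => u; apply: card_blocked.
  by rewrite sum_nat_const leq_mul2r max_card orbT.
have := leq_trans (subset_leq_card (nbhd_sub_candidates g)) (leq_card_setU _ _).1.
have deg_gp : c + #|VT| * (1 + M + Hb) <= #|nbhd e (g p)| := deg_ge (g p).
lia.
Qed.

Lemma extend_good g x : good_embedding D g -> x \in candidates g ->
  good_embedding (w |: D) (extend g x).
Proof.
case/andP=> /forallP g_off /forallP g_good; rewrite inE => /andP[gp_x /forallP x_ok].
have w_nbs u : u \in D -> eT w u = (u == p).
  by move=> uD; move/setP/(_ u): nbs_in_w; rewrite !inE uD eT_sym.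
have x_vs_D v : v \in D -> [&& x != g v, e x (g v) == eT w v & codeg e x (g v) < M].
  move=> vD; have /and3P[gv_x gv_nx codeg_x] := implyP (x_ok v) vD.
  rewrite eq_sym gv_x codegC codeg_x andbT w_nbs //=.
  case: (v =P p) => [->|/eqP vp]; first by rewrite e_sym gp_x.
  by move: gv_nx; rewrite vp e_sym => /negbTE ->.
apply/andP; split.
  apply/forallP=> v; rewrite !inE negb_or ffunE; apply/implyP=> /andP[/negbTE -> vD].
  exact: implyP (g_off v) vD.
apply/forallP=> u; apply/forallP=> v; apply/implyP; rewrite !inE !ffunE.
case/and3P=> /orP[/eqP->|uD] /orP[/eqP->|vD] uv.
- by rewrite eqxx in uv.
- by rewrite eqxx (ifN _ _ (memPn wD v vD)); apply: x_vs_D.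
- rewrite eqxx (ifN _ _ (memPn wD u uD)).
  have /and3P[gu_x x_gu codeg_x] := x_vs_D u uD.
  by rewrite eq_sym gu_x e_sym eT_sym x_gu codegC codeg_x.
- rewrite (ifN _ _ (memPn wD u uD)) (ifN _ _ (memPn wD v vD)).
  by have /forallP/(_ v) := g_good u; rewrite uD vD uv.
Qed.

Lemma card_good_embeddingsU1 : c * #|good_embeddings D| <= #|good_embeddings (w |: D)|.
Proof.
pose P := [set q : {ffun VT -> V} * V | good_embedding D q.1 && (q.2 \in candidates q.1)].
have sum_candidates : \sum_(g in good_embeddings D) #|candidates g| = #|P|.
  under eq_bigr do rewrite -sum1_card.
  by rewrite pair_big_dep -sum1_card; apply: eq_bigl => q; rewrite !inE.
have extend_inj : {in P &, injective (fun q => extend q.1 q.2)}.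
  move=> [g x] [g' x']; rewrite !inE /= => /andP[/andP[/forallP g_off _] _].
  move=> /andP[/andP[/forallP g'_off _] _] /ffunP eq_ext.
  have := eq_ext w; rewrite !ffunE eqxx => <-; congr (_, _); apply/ffunP=> v.
  have := eq_ext v; rewrite !ffunE; case: eqP => [-> _|//].
  by move: (g_off w) (g'_off w); rewrite wD => /eqP-> /eqP->.
apply: (@leq_trans #|P|).
  rewrite -sum_candidates mulnC -sum_nat_const leq_sum // => g.
  by rewrite inE; apply: card_candidates.
rewrite -(card_in_imset extend_inj) subset_leq_card //.
apply/subsetP=> _ /imsetP[[g x] gx_P ->].
move: gx_P; rewrite in_set => /andP[g_good x_cand].
by rewrite inE extend_good.
Qed.

End Extension.

Lemma card_good_embeddings D b : growth eT D b -> b ->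
  #|V| * c ^ #|D|.-1 <= #|good_embeddings D|.
Proof.
elim=> [r _|{}D {}b w growth_D IH wD _ /andP[/IH card_D /cards1P[p nbs_p]]].
  by rewrite cards1 muln1 card_good_embeddings1.
have [D_gt0 _] := growth_card growth_D.
rewrite cardsU1 wD /= -(prednK D_gt0) expnS mulnCA.
exact: leq_trans (leq_mul (leqnn c) card_D) (card_good_embeddingsU1 wD nbs_p).
Qed.

Lemma good_embeddings_induced : good_embeddings setT \subset induced_copies eT e.
Proof.
apply/subsetP=> f; rewrite !inE => /andP[_ /forallP f_good]; apply/andP; split.
  apply/injectiveP=> u v fu_fv; apply/eqP; apply: contraT => uv.
  by have /forallP/(_ v) := f_good u; rewrite !inE uv fu_fv eqxx.
apply/forallP=> u; apply/forallP=> v; apply/implyP=> uv.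
by have /forallP/(_ v) := f_good u; rewrite !inE uv => /and3P[].
Qed.

End GreedyEmbedding.

Lemma card_induced_copies_ge (VT : finType) (eT : rel VT) (V : finType) (e : rel V)
    (M Hb c : nat) :
  is_tree eT -> symmetric e ->
  (forall x, #|heavy e M x| <= Hb) ->
  (forall x, c + #|VT| * (1 + M + Hb) <= deg e x) ->
  #|V| * c ^ #|VT|.-1 <= #|induced_copies eT e|.
Proof.
move=> eT_tree e_sym heavy_le deg_ge.
have [->|/card_gt0P[x0 _]] := posnP #|V|; first by [].
have [[eT_sym _] _ _ _] := eT_tree.
have := card_good_embeddings eT_sym e_sym x0 heavy_le deg_ge (tree_growth eT_tree) isT.
rewrite cardsT => /leq_trans; apply; apply/subset_leq_card/good_embeddings_induced.
Qed.

Local Open Scope ring_scope.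

Section DegreeBudget.
Variables (R : realFieldType) (K : R) (t s dmin dmax : nat).
Hypotheses (K_gt1 : 1 < K) (t_gt0 : (0 < t)%N) (s_gt0 : (0 < s)%N).
Hypothesis dmax_le : dmax%:R <= K * dmin%:R.

Let L := 4 * K * t%:R.
Let theta : R := dmin%:R / (4 * t%:R).

Let t_ge1 : 1 <= t%:R :> R. Proof. by rewrite ler1n. Qed.
Let s_ge1 : 1 <= s%:R :> R. Proof. by rewrite ler1n. Qed.
Let L_ge4 : 4 <= L. Proof. rewrite /L; have := t_ge1; have := ltW K_gt1; nra. Qed.
Let L_gt1 : 1 < L. Proof. by apply: lt_le_trans L_ge4; rewrite ltr1n. Qed.
Let L_gt0 : 0 < L. Proof. exact: lt_trans L_gt1. Qed.

Let L_theta : L * theta = K * dmin%:R.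
Proof. by rewrite /L /theta; field; rewrite pnatr_eq0 -lt0n. Qed.

Lemma avg_deg_budget (d : R) : d <= dmax%:R -> L ^+ (6 * s) * s%:R ^+ 3 <= d ->
  s%:R * L ^+ (2 * s) <= theta.
Proof.
move=> d_le d_ge; rewrite -(ler_pM2l L_gt0) L_theta.
apply: le_trans dmax_le; apply: le_trans d_le; apply: le_trans d_ge.
rewrite mulrCA -exprS [_ * _ ^+ 3]mulrC.
rewrite ler_pM ?exprn_ge0 ?ler0n ?ler_eXnr ?(ltW L_gt0) //.
by rewrite ler_eXn2l //; lia.
Qed.

Hypothesis theta_ge : s%:R * L ^+ (2 * s) <= theta.

Let M := (dmin %/ (4 * t))%N.

Let theta_gt0 : 0 < theta.
Proof.
by apply: lt_le_trans theta_ge; rewrite mulr_gt0 ?exprn_gt0 ?ltr0n.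
Qed.

Let M_le_theta : M%:R <= theta.
Proof.
by rewrite ler_pdivlMr ?natrM ?mulr_gt0 ?ltr0n // -!natrM ler_nat leq_trunc_div.
Qed.

Let theta_lt_M1 : theta < M%:R + 1.
Proof.
rewrite ltr_pdivrMr ?natrM ?mulr_gt0 ?ltr0n // natr1 -!natrM ltr_nat.
by rewrite ltn_ceil ?muln_gt0.
Qed.

Let M_sub_s : (s < M)%N /\ theta / 2 <= (M - s)%:R.
Proof.
have two_s : 2 * (s%:R + 1) <= theta.
  apply: le_trans theta_ge; have : L <= L ^+ (2 * s) by rewrite ler_eXnr ?muln_gt0 // ltW.
  have := L_ge4; have := s_ge1; nra.
have s1 := s_ge1; have M1 := theta_lt_M1.
have s_lt_M : (s < M)%N by rewrite -(ltr_nat R); lra.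
split; first exact: s_lt_M.
rewrite natrB; last exact: ltnW.
lra.
Qed.

Let heavy_bound Hb : (Hb * (M - s) ^ s <= (s - 1) * dmax ^ s)%N ->
  Hb%:R <= (s%:R - 1) * L ^+ (2 * s).
Proof.
move=> Hb_le; have [s_lt_M half_theta] := M_sub_s.
have half_gt0 : 0 < theta / 2 by rewrite divr_gt0.
rewrite -(ler_pM2r (exprn_gt0 s half_gt0)).
apply: le_trans (_ : Hb%:R * (M - s)%:R ^+ s <= _).
  by rewrite ler_wpM2l // ler_pXn2r // nnegrE ?ler0n ?ltW.
apply: le_trans (_ : (s - 1)%:R * dmax%:R ^+ s <= _).
  by rewrite -!natrX -!natrM ler_nat.
rewrite -mulrA natrB // ler_wpM2l ?subr_ge0 //.
apply: le_trans (_ : (2 * L) ^+ s * (theta / 2) ^+ s <= _).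
  rewrite -exprMn; have -> : 2 * L * (theta / 2) = K * dmin%:R by rewrite -L_theta; field.
  by rewrite ler_pXn2r // nnegrE ?mulr_ge0 ?ler0n // (le_trans ler01 (ltW K_gt1)).
apply: ler_wpM2r; first by rewrite exprn_ge0 // divr_ge0 // ltW.
rewrite exprM ler_pXn2r // ?nnegrE ?exprn_ge0 ?(ltW L_gt0) //.
all: have := L_ge4; nra.
Qed.

Lemma greedy_budget Hb : (Hb * (M - s) ^ s <= (s - 1) * dmax ^ s)%N ->
  (2 * (t * (1 + M + Hb)) <= dmin)%N.
Proof.
move=> /heavy_bound Hb_le.
have dmin_theta : dmin%:R = 4 * t%:R * theta.
  by rewrite /theta mulrC mulfVK // mulf_neq0 ?pnatr_eq0 -?lt0n.
have L_pow_ge1 : 1 <= L ^+ (2 * s) by rewrite exprn_ege1 // ltW.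
have t0 : 0 <= t%:R :> R by [].
have := M_le_theta; have := theta_ge; move: Hb_le L_pow_ge1 t0.
rewrite -(ler_nat R) dmin_theta !natrM !natrD; nra.
Qed.

End DegreeBudget.

Theorem theorem1p3 (R : realFieldType) (VT : finType) (eT : rel VT)
  (K : R) (s : nat) (V : finType) (e : rel V) :
  is_tree eT -> 1 < K -> (0 < s)%N ->
  simple_graph e -> almost_regular K e -> Kss_free s e ->
  (4 * K * (#|VT|)%:R) ^+ (6 * s) * (s%:R) ^+ 3 <= avg_deg R e ->
  (#|V|)%:R * (avg_deg R e / (2 * K)) ^+ (#|VT|).-1
    <= (#|induced_copies eT e|)%:R.
Proof.
move=> T_tree K_gt1 s_gt0 [e_sym e_irr] e_reg e_Kss d_ge.
have t_gt0 : (0 < #|VT|)%N by case: T_tree.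
have [V0|V_gt0] := posnP #|V|; first by rewrite V0 mul0r ler0n.
pose M := (mindeg e %/ (4 * #|VT|))%N.
pose Hb := (\max_u #|heavy e M u|)%N.
have d_maxdeg := avg_deg_le_maxdeg e_sym e_irr R.
have budget : (2 * (#|VT| * (1 + M + Hb)) <= mindeg e)%N.
  have := avg_deg_budget K_gt1 t_gt0 s_gt0 e_reg d_maxdeg d_ge.
  move/(greedy_budget K_gt1 t_gt0 s_gt0 e_reg); apply; rewrite /Hb.
  have [u ->] := bigop.eq_bigmax (fun u => #|heavy e M u|) V_gt0.
  exact: card_heavy_exp.
pose c := (mindeg e - #|VT| * (1 + M + Hb))%N.
have deg_ge x : (c + #|VT| * (1 + M + Hb) <= deg e x)%N.
  by rewrite subnK ?mindeg_le // (leq_trans _ budget) // leq_pmull.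
have heavy_le x : (#|heavy e M x| <= Hb)%N by exact: leq_bigmax.
have copies := card_induced_copies_ge T_tree e_sym heavy_le deg_ge.
have d_c : avg_deg R e / (2 * K) <= c%:R.
  have mindeg_c : (mindeg e)%:R <= 2 * c%:R :> R by rewrite -natrM ler_nat /c; lia.
  rewrite ler_pdivrMr; last by lra.
  move: e_reg; rewrite /almost_regular; nra.
apply: le_trans (_ : #|V|%:R * c%:R ^+ #|VT|.-1 <= _).
  apply: ler_wpM2l => //; apply: lerXn2r => //; rewrite nnegrE ?ler0n //.
  by rewrite divr_ge0 ?divr_ge0 //; lra.
by rewrite -natrX -natrM ler_nat copies.
Qed.
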